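(* Let $T$ be a monoidal monad on $\mathbf{Set}$, let $n\ge 1$, and let $\Sigma$ be a signature containing an $n$-ary operation symbol $f$. Then $T$ preserves the equation $f(x,\dots,x)=x$ if and only if $T$ is $n$-relevant.
   Context: A monoidal monad on $\mathbf{Set}$ is a monad with natural $\psi_{X,Y}\colon TX\times TY\to T(X\times Y)$ making it lax monoidal with $\psi^0=\eta_1$ and with $\eta,\mu$ monoidal; $\psi^n$ is its $n$-ary version. The lifting $\widehat T\mathcal A$ of a $\Sigma$-algebra on $A$ has carrier $TA$ and operations $T\sigma_{\mathcal A}\circ\psi^{\mathrm{ar}(\sigma)}$; $T$ preserves an equation if $\widehat T\mathcal A$ satisfies it whenever $\mathcal A$ does. $T$ is $n$-relevant if $\psi^n\circ\Delta^n_{TA}=T\Delta^n_A$ for all sets $A$, where $\Delta^n_X\colon X\to X^n$ is the diagonal (equivalently $\psi^n\circ\langle T\pi_1,\dots,T\pi_n\rangle=\mathrm{id}$). *)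

Record monoidal_monad := {
  T : Type -> Type;
  fmap : forall A B : Type, (A -> B) -> T A -> T B;
  eta : forall A : Type, A -> T A;
  mu : forall A : Type, T (T A) -> T A;
  psi : forall A B : Type, T A * T B -> T (A * B);
  fmap_id : forall A (t : T A), fmap A A (fun x => x) t = t;
  fmap_comp : forall A B C (f : A -> B) (g : B -> C) (t : T A),
      fmap A C (fun x => g (f x)) t = fmap B C g (fmap A B f t);
  eta_nat : forall A B (f : A -> B) (x : A), fmap A B f (eta A x) = eta B (f x);
  mu_nat : forall A B (f : A -> B) (t : T (T A)),
      fmap A B f (mu A t) = mu B (fmap (T A) (T B) (fmap A B f) t);
  mu_eta_l : forall A (t : T A), mu A (eta (T A) t) = t;
  mu_eta_r : forall A (t : T A), mu A (fmap A (T A) (eta A) t) = t;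
  mu_assoc : forall A (t : T (T (T A))),
      mu A (mu (T A) t) = mu A (fmap (T (T A)) (T A) (mu A) t);
  psi_nat : forall A B C D (f : A -> C) (g : B -> D) (a : T A) (b : T B),
      psi C D (fmap A C f a, fmap B D g b)
      = fmap (A * B) (C * D) (fun p => (f (fst p), g (snd p))) (psi A B (a, b));
  psi_assoc : forall A B C (a : T A) (b : T B) (c : T C),
      fmap ((A * B) * C) (A * (B * C))
           (fun p => (fst (fst p), (snd (fst p), snd p)))
           (psi (A * B) C (psi A B (a, b), c))
      = psi A (B * C) (a, psi B C (b, c));
  psi_unit_l : forall A (a : T A),
      fmap (unit * A) A snd (psi unit A (eta unit tt, a)) = a;
  psi_unit_r : forall A (a : T A),
      fmap (A * unit) A fst (psi A unit (a, eta unit tt)) = a;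
  eta_monoidal : forall A B (a : A) (b : B),
      psi A B (eta A a, eta B b) = eta (A * B) (a, b);
  mu_monoidal : forall A B (x : T (T A)) (y : T (T B)),
      mu (A * B) (fmap (T A * T B) (T (A * B)) (psi A B) (psi (T A) (T B) (x, y)))
      = psi A B (mu A x, mu B y)
}.

Fixpoint vec (A : Type) (n : nat) : Type :=
  match n with
  | O => unit
  | S m => (A * vec A m)%type
  end.

Fixpoint diag (A : Type) (n : nat) : A -> vec A n :=
  match n as k return A -> vec A k with
  | O => fun _ => tt
  | S m => fun x => (x, diag A m x)
  end.

Fixpoint psin (M : monoidal_monad) (A : Type) (n : nat) : vec (T M A) n -> T M (vec A n) :=
  match n as k return vec (T M A) k -> T M (vec A k) with
  | O => fun _ => eta M unit tt
  | S m => fun v => psi M A (vec A m) (fst v, psin M A m (snd v))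
  end.

Record signature := { op : Type; arity : op -> nat }.

Record algebra (S : signature) := {
  carrier : Type;
  interp : forall o : op S, vec carrier (arity S o) -> carrier
}.
Arguments carrier {S} _.
Arguments interp {S} _ _ _.

Definition lift (M : monoidal_monad) (S : signature) (Alg : algebra S) : algebra S :=
  {| carrier := T M (carrier Alg);
     interp := fun o v =>
       fmap M (vec (carrier Alg) (arity S o)) (carrier Alg) (interp Alg o)
            (psin M (carrier Alg) (arity S o) v) |}.

Definition sat_idem (S : signature) (f : op S) (Alg : algebra S) : Prop :=
  forall x : carrier Alg, interp Alg f (diag (carrier Alg) (arity S f) x) = x.

Definition preserves_idem (M : monoidal_monad) (S : signature) (f : op S) : Prop :=
  forall Alg : algebra S, sat_idem S f Alg -> sat_idem S f (lift M S Alg).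

Definition n_relevant (M : monoidal_monad) (n : nat) : Prop :=
  forall (A : Type) (t : T M A),
    psin M A n (diag (T M A) n t) = fmap M A (vec A n) (diag A n) t.

(* The direction from n-relevance is a one-line computation.  Conversely, the
   set A^n carries the "diagonal" operation f(v_1, ..., v_n) = (v_1_1, ..., v_n_n),
   which satisfies f(x, ..., x) = x.  Since T is natural, evaluating the lifted
   operation on the constant tuple (T Delta)(t) yields psi^n(Delta t) (pushed back
   along the diagonal), while the equation forces it to be (T Delta)(t) itself.
   A point is adjoined to A^n so that nullary symbols can be interpreted even when
   A is empty, which is harmless because T(Some) is injective in any monad. *)

From Stdlib Require Import FunctionalExtensionality.

Fixpoint vmap (A B : Type) (h : A -> B) (n : nat) : vec A n -> vec B n :=
  match n as k return vec A k -> vec B k with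
  | O => fun _ => tt
  | S m => fun v => (h (fst v), vmap A B h m (snd v))
  end.

Lemma vmap_diag A B (h : A -> B) n x : vmap A B h n (diag A n x) = diag B n (h x).
Proof. induction n as [|n IH]; simpl; [reflexivity | now rewrite IH]. Qed.

Lemma vmap_comp A B C (h : A -> B) (g : B -> C) n v :
  vmap B C g n (vmap A B h n v) = vmap A C (fun x => g (h x)) n v.
Proof. induction n as [|n IH]; simpl; [reflexivity | now rewrite IH]. Qed.

(* The i-th coordinate is read off the i-th argument; any missing argument or
   adjoined point [None] makes the result [None]. *)
Fixpoint diagonal_pick (A : Type) (n m : nat) : vec (option (vec A n)) m -> option (vec A n) :=
  match n as k return vec (option (vec A k)) m -> option (vec A k) with
  | O => fun _ => Some tt
  | S n' =>
      match m as j return vec (option (vec A (S n'))) j -> option (vec A (S n')) with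
      | O => fun _ => None
      | S m' => fun v =>
          match fst v with
          | Some (a, _) =>
              option_map (pair a)
                (diagonal_pick A n' m' (vmap _ _ (option_map snd) m' (snd v)))
          | None => None
          end
      end
  end.

Lemma diagonal_pick_diag_Some A n w :
  diagonal_pick A n n (diag _ n (Some w)) = Some w.
Proof.
  induction n as [|n IH]; simpl.
  - now destruct w.
  - destruct w as [a w]. rewrite vmap_diag; cbn [option_map snd]. now rewrite IH.
Qed.

Lemma diagonal_pick_diag_None A n : 1 <= n -> diagonal_pick A n n (diag _ n None) = None.
Proof. destruct n; [inversion 1 | reflexivity]. Qed.

Lemma diagonal_pick_vmap_diag A n w :
  diagonal_pick A n n (vmap _ _ (fun a => Some (diag A n a)) n w) = Some w.
Proof.
  induction n as [|n IH]; simpl.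
  - now destruct w.
  - destruct w as [a w]. now rewrite vmap_comp, IH.
Qed.

Definition diagonal_algebra (S : signature) (A : Type) (n : nat) : algebra S :=
  {| carrier := option (vec A n);
     interp := fun o => diagonal_pick A n (arity S o) |}.

Lemma diagonal_algebra_idem (S : signature) (f : op S) (A : Type) :
  1 <= arity S f -> sat_idem S f (diagonal_algebra S A (arity S f)).
Proof.
  intros Hpos [w|]; simpl.
  - apply diagonal_pick_diag_Some.
  - now apply diagonal_pick_diag_None.
Qed.

Section MonoidalMonad.
Variable M : monoidal_monad.

Lemma fmap_ext A B (f g : A -> B) t :
  (forall x, f x = g x) -> fmap M A B f t = fmap M A B g t.
Proof. intro E. now rewrite (functional_extensionality f g E). Qed.

Lemma fmap_Some_inj A (s t : T M A) :
  fmap M A (option A) Some s = fmap M A (option A) Some t -> s = t.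
Proof.
  intro E.
  set (retract := fun o : option A => match o with Some a => eta M A a | None => s end).
  assert (Hretract : forall u, mu M A (fmap M _ _ retract (fmap M _ _ Some u)) = u).
  { intro u. rewrite <- fmap_comp. apply mu_eta_r. }
  now rewrite <- (Hretract s), E, Hretract.
Qed.

Lemma psin_nat A B (h : A -> B) n v :
  psin M B n (vmap _ _ (fmap M A B h) n v) = fmap M _ _ (vmap A B h n) (psin M A n v).
Proof.
  induction n as [|n IH]; simpl.
  - now rewrite eta_nat.
  - rewrite IH, psi_nat. apply fmap_ext. now intros [a w].
Qed.

Lemma psin_diag_fmap A B (h : A -> B) n t :
  psin M B n (diag _ n (fmap M A B h t)) = fmap M _ _ (vmap A B h n) (psin M A n (diag _ n t)).
Proof. now rewrite <- vmap_diag, psin_nat. Qed.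

Lemma preserves_idem_of_relevant (S : signature) (f : op S) :
  n_relevant M (arity S f) -> preserves_idem M S f.
Proof.
  intros Hrel Alg Hidem t; simpl.
  rewrite Hrel, <- fmap_comp, (fmap_ext _ _ _ (fun x => x)) by apply Hidem.
  apply fmap_id.
Qed.

Lemma relevant_of_preserves_idem (S : signature) (f : op S) :
  1 <= arity S f -> preserves_idem M S f -> n_relevant M (arity S f).
Proof.
  intros Hpos Hpres A t; set (n := arity S f) in *.
  apply fmap_Some_inj.
  assert (Hlift := Hpres _ (diagonal_algebra_idem S f A Hpos)
                     (fmap M _ _ (fun a => Some (diag A n a)) t)).
  simpl in Hlift; fold n in Hlift.
  rewrite psin_diag_fmap, <- fmap_comp in Hlift.
  rewrite (fmap_ext _ _ _ Some) in Hlift by apply diagonal_pick_vmap_diag.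
  now rewrite Hlift, fmap_comp.
Qed.

End MonoidalMonad.

Theorem theorem5 (M : monoidal_monad) (n : nat) (Hn : 1 <= n)
  (S : signature) (f : op S) (Hf : arity S f = n) :
  preserves_idem M S f <-> n_relevant M n.
Proof.
  subst n; split.
  - now apply relevant_of_preserves_idem.
  - apply preserves_idem_of_relevant.
Qed.
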